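(* Let $m \geq 0$ and $n \geq 1$ be integers and let $c = (c^t; c^b) = (c^t_1, \ldots, c^t_m; c^b_1, \ldots, c^b_n)$ be a stable configuration on $K_{m,n}^0$. For $j \in \{1, \ldots, n\}$, define $k_j := \left|\{ i \in \{1,\ldots,m\} : c^t_i < j \}\right|$, and let $(\tilde{c}^b_1, \ldots, \tilde{c}^b_n)$ be the non-decreasing rearrangement of $(c^b_1, \ldots, c^b_n)$. Then $c$ is stochastically recurrent if and only if $$\text{for all } j \in \{1,\ldots,n\}: \quad \tilde{c}^b_1 + \cdots + \tilde{c}^b_j \geq k_1 + \cdots + k_j.$$ Moreover, if $c$ is stochastically recurrent, then $\mathrm{level}(c) = c^b_1 + \cdots + c^b_n - (k_1 + \cdots + k_n)$.
   Context: $K_{m,n}^0$ is the complete bipartite graph with ''top'' vertices $v^t_0, v^t_1, \ldots, v^t_m$ and ''bottom'' vertices $v^b_1, \ldots, v^b_n$, with an edge between every top vertex and every bottom vertex; $v^t_0$ is called the sink. A configuration is a vector $c = (c^t_1, \ldots, c^t_m; c^b_1, \ldots, c^b_n)$ of non-negative integers ($c^*_i$ = number of grains at the non-sink vertex $v^*_i$). A non-sink vertex is stable if its number of grains is less than its degree, i.e. $c^t_i < n$, resp. $c^b_j < m+1$; $c$ is stable if all non-sink vertices are stable. Stochastic sandpile model (SSM) with a fixed parameter $p \in (0,1)$: an unstable vertex topples as follows: for each of its neighbours (for a bottom vertex this includes the sink $v^t_0$), independently (and independently of all previous topplings), with probability $p$ it sends one grain to that neighbour, and otherwise keeps that grain;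 grains sent to the sink disappear. Starting from any configuration and repeatedly toppling unstable vertices, one reaches a (random) stable configuration whose law does not depend on the toppling order. Consider the Markov chain on stable configurations which at each step adds a grain to a non-sink vertex chosen uniformly at random and then stabilises according to the SSM. A stable configuration is stochastically recurrent if it is a recurrent state of this Markov chain (appears infinitely often in its long-time running). The level of a configuration is $\mathrm{level}(c) := \sum_{i=1}^m c^t_i + \sum_{j=1}^n c^b_j - mn$. *)

From mathcomp Require Import all_boot all_order all_algebra.
From Stdlib Require Import Relations.
Set Implicit Arguments. Unset Strict Implicit. Unset Printing Implicit Defensive.

(* Complete bipartite graph K^0_{m,n}: top vertices v^t_0 (sink), v^t_1..v^t_m,
   bottom vertices v^b_1..v^b_n.  Non-sink top vertex v^t_{i+1} is indexed by
   i : 'I_m, bottom vertex v^b_{j+1} by j : 'I_n.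
   Degrees: top vertices have degree n, bottom vertices degree m+1. *)

Definition config (m n : nat) : Type := ({ffun 'I_m -> nat} * {ffun 'I_n -> nat})%type.

Definition stable (m n : nat) (c : config m n) : Prop :=
  (forall i : 'I_m, c.1 i < n) /\ (forall j : 'I_n, c.2 j < m.+1).

(* One SSM toppling of an unstable non-sink vertex, in which the set S of
   neighbours that receive a grain is given explicitly.  In the SSM each
   subset S of neighbours is chosen with probability p^|S| (1-p)^(deg-|S|),
   which is > 0 for every S since 0 < p < 1.  For a bottom vertex the
   boolean [s] records whether a grain is sent to the sink (and disappears). *)
Definition topple_step (m n : nat) (c c' : config m n) : Prop :=
  (exists i : 'I_m, n <= c.1 i /\ exists S : {set 'I_n},
      c' = ([ffun i' => if i' == i then c.1 i - #|S| else c.1 i'],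
            [ffun j => c.2 j + (j \in S)]))
  \/
  (exists j : 'I_n, m.+1 <= c.2 j /\ exists (s : bool) (S : {set 'I_m}),
      c' = ([ffun i => c.1 i + (i \in S)],
            [ffun j' => if j' == j then c.2 j - (s + #|S|) else c.2 j'])).

Definition stabilizes_to (m n : nat) (c c' : config m n) : Prop :=
  clos_refl_trans _ (@topple_step m n) c c' /\ stable c'.

Definition add_grain (m n : nat) (c : config m n) (v : 'I_m + 'I_n) : config m n :=
  match v with
  | inl i => ([ffun i' => c.1 i' + (i' == i)], c.2)
  | inr j => (c.1, [ffun j' => c.2 j' + (j' == j)])
  end.

(* Positive-probability transition of the Markov chain on stable configurations
   (the vertex is chosen uniformly, so every vertex has probability > 0). *)
Definition chain_step (m n : nat) (c c' : config m n) : Prop :=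
  stable c /\ exists v : 'I_m + 'I_n, stabilizes_to (add_grain c v) c'.

Definition chain_reach (m n : nat) := clos_refl_trans _ (@chain_step m n).

(* Recurrent state of the (finite-state) Markov chain: every state reachable
   with positive probability from c leads back to c with positive probability. *)
Definition stoch_recurrent (m n : nat) (c : config m n) : Prop :=
  stable c /\ forall c', chain_reach c c' -> chain_reach c' c.

Definition kk (m n : nat) (c : config m n) (j : nat) : nat :=
  #|[set i : 'I_m | c.1 i < j]|.

Definition sorted_bottom (m n : nat) (c : config m n) : seq nat :=
  sort leq [seq c.2 j | j <- enum 'I_n].

Definition level (m n : nat) (c : config m n) : int :=
  ((\sum_(i < m) c.1 i + \sum_(j < n) c.2 j)%N%:Z - (m * n)%N%:Z)%R.

From mathcomp Require Import all_boot all_order all_algebra all_fingroup.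
From Stdlib Require Import Relations Wf_nat.
From mathcomp Require Import zify.

Set Implicit Arguments. Unset Strict Implicit. Unset Printing Implicit Defensive.

(* A stable configuration is recurrent iff for every set B of bottom vertices
     \sum_i (|B| - c^t_i)_+ <= \sum_(j in B) c^b_j      ([recurrence_cond]);
   for |B| = j the left side is k_1 + ... + k_j, and the least right side is the sum of
   the j smallest bottom values.  The condition holds for the maximal stable configuration,
   is monotone in the grains and survives every toppling, so it is invariant under the
   chain; and the maximal configuration is reachable from every stable one by adding grains.
   Conversely, a stable configuration satisfying the condition is reachable from the maximal
   one.  If a bottom vertex b holds fewer than m grains, raise it to m and take one grain from
   each of the m - c^b_b richest top vertices (the condition for {b} guarantees they have
   one): the condition persists, and adding a grain at b and toppling it into the sink and
   those top vertices undoes the change.  Once every bottom vertex holds m grains, a top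
   vertex raised to n - 1 is brought back to any value by adding a grain and toppling it
   towards suitably many bottom vertices, each of which then topples into the sink.
   The level formula is the identity \sum_i (n - c^t_i) = k_1 + ... + k_n. *)

Lemma sum_mem_card (I : finType) (A : {pred I}) : \sum_i (i \in A : nat) = #|A|.
Proof. by rewrite -sum1_card [RHS]big_mkcond; apply: eq_bigr => i _; case: (i \in A). Qed.

Lemma sum_mem_cardI (I : finType) (A B : {set I}) :
  \sum_(i in A) (i \in B : nat) = #|A :&: B|.
Proof.
by rewrite -sum_mem_card big_mkcond; apply: eq_bigr => i _; rewrite in_setI; case: (i \in A).
Qed.

Lemma ltn_sum (I : finType) (F G : I -> nat) (i0 : I) :
  (forall i, F i <= G i) -> F i0 < G i0 -> \sum_i F i < \sum_i G i.
Proof.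
move=> leFG ltFG0; rewrite (bigD1 i0) //= [X in _ < X](bigD1 i0) //=.
by rewrite -addSn leq_add //; apply: leq_sum.
Qed.
Arguments ltn_sum {I F G} i0.

Lemma leq_sum_dominated (I : finType) (f : I -> nat) (X Y : {set I}) :
  #|X| <= #|Y| -> (forall x y, x \in X -> y \in Y -> f x <= f y) ->
  \sum_(x in X) f x <= \sum_(y in Y) f y.
Proof.
move=> leXY domXY; set M := \max_(x in X) f x.
have sumX : \sum_(x in X) f x <= #|X| * M.
  by rewrite -sum_nat_const; apply: leq_sum => x Xx; apply: leq_bigmax_cond.
have sumY : #|Y| * M <= \sum_(y in Y) f y.
  rewrite -sum_nat_const; apply: leq_sum => y Yy.
  by apply/bigmax_leqP => x Xx; apply: domXY.
exact: leq_trans sumX (leq_trans (leq_mul leXY (leqnn M)) sumY).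
Qed.

Lemma card_set_ord_le (n : nat) (A : {set 'I_n}) : #|A| <= n.
Proof. by rewrite -[X in _ <= X]card_ord max_card. Qed.

Lemma card_ord_prefix (n k : nat) : k <= n -> #|[set i : 'I_n | i < k]| = k.
Proof.
move=> le_kn; rewrite -sum1_card (eq_bigl (fun i : 'I_n => i < k)); last first.
  by move=> i; rewrite inE.
by rewrite -(big_ord_widen n (fun _ => 1) le_kn) sum1_card card_ord.
Qed.

Lemma leq_sum_prefix (n : nat) (f : 'I_n -> nat) (A : {set 'I_n}) :
  {homo f : i j / i <= j} -> \sum_(i < n | i < #|A|) f i <= \sum_(i in A) f i.
Proof.
move=> homo_f; set P := [set i : 'I_n | i < #|A|].
have cardP : #|P| = #|A| by rewrite card_ord_prefix // card_set_ord_le.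
rewrite (eq_bigl (fun i => i \in P)); last by move=> i; rewrite inE.
rewrite (big_setID A) [X in _ <= X](big_setID P) setIC leq_add2l.
apply: leq_sum_dominated => [|x y].
  by rewrite !cardsD cardP setIC.
by rewrite !inE -!leqNgt => /andP[_ ltx] /andP[ley _]; apply/homo_f/ltnW/(leq_trans ltx).
Qed.

Lemma exists_top_set (I : finType) (f : I -> nat) (k : nat) : k <= #|I| ->
  exists2 T : {set I}, #|T| = k & forall i i', i \in T -> i' \notin T -> f i' <= f i.
Proof.
elim: k => [|k IH] le_kI.
  by exists set0 => [|i i']; rewrite ?cards0 ?inE.
have [T cardT topT] := IH (ltnW le_kI).
have [i0 Ti0] : exists i0, i0 \in ~: T by apply/card_gt0P; rewrite cardsCs setCK; lia.
case: (arg_maxnP f Ti0) => i Ti maxi.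
have {}Ti : i \notin T by rewrite -in_setC.
have {}maxi j : j \notin T -> f j <= f i by rewrite -in_setC; apply: maxi.
exists (i |: T) => [|i1 i1']; first by rewrite cardsU1 cardT Ti.
rewrite !in_setU1 negb_or => /predU1P[-> | Ti1] /andP[_ Ti1'].
  exact: maxi.
exact: topT.
Qed.

Lemma clos_rt_invariant (T : Type) (R : relation T) (P : T -> Prop) :
  (forall x y, R x y -> P x -> P y) ->
  forall x y, clos_refl_trans T R x y -> P x -> P y.
Proof. by move=> RP x y; elim=> [x' y' /RP | // | x' y' z' _ Pxy _ Pyz /Pxy /Pyz]. Qed.

Section SortedBottom.

Variables (m n : nat) (c : config m n).

Local Notation s := (sorted_bottom c).

Lemma sorted_bottom_perm : exists p : {perm 'I_n}, forall i : 'I_n, nth 0 s i = c.2 (p i).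
Proof.
have /tuple_permP[p sp] : perm_eq s (map_tuple c.2 (ord_tuple n)) by rewrite perm_sort.
by exists p => i; rewrite sp nth_mktuple tnth_map tnth_ord_tuple.
Qed.

Lemma sorted_bottom_homo : {homo (fun i : 'I_n => nth 0 s i) : i j / i <= j}.
Proof.
have size_s : size s = n by rewrite size_sort size_map size_enum_ord.
move=> i j le_ij; apply: (sorted_leq_nth leq_trans leqnn 0 (sort_sorted leq_total _)) => //;
  by rewrite inE size_s.
Qed.

Lemma sum_sorted_bottom_le (B : {set 'I_n}) :
  \sum_(l < #|B|) nth 0 s l <= \sum_(j in B) c.2 j.
Proof.
have [p sp] := sorted_bottom_perm.
have -> : \sum_(j in B) c.2 j = \sum_(i in p @^-1: B) nth 0 s i.
  by rewrite (reindex_inj (@perm_inj _ p)); apply: eq_big => i; rewrite ?inE ?sp.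
rewrite (big_ord_widen n _ (card_set_ord_le B)) -(card_preimset B (@perm_inj _ p)).
exact: leq_sum_prefix sorted_bottom_homo.
Qed.

Lemma sum_sorted_bottom_attained (k : nat) : k <= n ->
  exists2 B : {set 'I_n}, #|B| = k & \sum_(j in B) c.2 j = \sum_(l < k) nth 0 s l.
Proof.
move=> le_kn; have [p sp] := sorted_bottom_perm.
exists (p @: [set i : 'I_n | i < k]).
  by rewrite card_imset ?card_ord_prefix //; apply: perm_inj.
rewrite big_imset /=; last by move=> i j _ _; apply: perm_inj.
by rewrite (big_ord_widen n _ le_kn); apply: eq_big => [i|i _]; rewrite ?inE ?sp.
Qed.

End SortedBottom.

Section RecurrenceCondition.

Variables m n : nat.
Implicit Types c d : config m n.

Definition top_deficit (t : {ffun 'I_m -> nat}) (k : nat) : nat := \sum_(i < m) (k - t i).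

Definition recurrence_cond c : Prop :=
  forall B : {set 'I_n}, top_deficit c.1 #|B| <= \sum_(j in B) c.2 j.

Lemma sum_kk c k : \sum_(1 <= l < k.+1) kk c l = top_deficit c.1 k.
Proof.
elim: k => [|k IH]; first by rewrite big_geq // /top_deficit big1 // => i _; rewrite sub0n.
rewrite big_nat_recr //= IH /kk -sum_mem_card -big_split /=.
by apply: eq_bigr => i _; rewrite inE; case: ltnP; lia.
Qed.

Lemma recurrence_condE c : recurrence_cond c <->
  (forall j : nat, 1 <= j <= n ->
     \sum_(l < j) nth 0 (sorted_bottom c) l >= \sum_(1 <= l < j.+1) kk c l).
Proof.
split=> [cond j /andP[_ le_jn] | cond B].
  have [B <- <-] := sum_sorted_bottom_attained c le_jn.
  by rewrite sum_kk.
case: (posnP #|B|) => [-> | B_gt0].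
  by rewrite /top_deficit big1 // => i _; rewrite sub0n.
rewrite -sum_kk; apply: leq_trans (sum_sorted_bottom_le c B).
by apply: cond; rewrite B_gt0 card_set_ord_le.
Qed.

Lemma level_stable c : stable c ->
  level c = ((\sum_(j < n) c.2 j)%N%:Z - (\sum_(1 <= l < n.+1) kk c l)%N%:Z)%R.
Proof.
move=> [top_lt _]; rewrite sum_kk /level /top_deficit.
have fill : \sum_(i < m) (n - c.1 i) + \sum_(i < m) c.1 i = m * n.
  rewrite -big_split /= (eq_bigr (fun _ => n)) => [|i _]; last by rewrite subnK // ltnW.
  by rewrite sum_nat_const card_ord.
lia.
Qed.

Lemma top_deficit_homo (t u : {ffun 'I_m -> nat}) k :
  (forall i, t i <= u i) -> top_deficit u k <= top_deficit t k.
Proof. by move=> le_tu; apply: leq_sum => i _; apply: leq_sub2l. Qed.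

Lemma recurrence_cond_mono c d :
  (forall i, c.1 i <= d.1 i) -> (forall j, c.2 j <= d.2 j) ->
  recurrence_cond c -> recurrence_cond d.
Proof.
move=> le_top le_bot cond B; apply: leq_trans (top_deficit_homo _ le_top) _.
by apply: leq_trans (cond B) _; apply: leq_sum => j _.
Qed.

Lemma recurrence_cond_add_grain c v : recurrence_cond c -> recurrence_cond (add_grain c v).
Proof. by apply: recurrence_cond_mono; case: v => v x /=; rewrite ?ffunE ?leq_addr. Qed.

Lemma recurrence_cond_topple c d : topple_step c d -> recurrence_cond c -> recurrence_cond d.
Proof.
case=> [[i0 [n_le [S ->]]] | [j0 [m_lt [s [S ->]]]]] cond B.
- have := cond B; rewrite /top_deficit (bigD1 i0) //= => /(leq_trans (leq_addl _ _)) cond_B.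
  rewrite (bigD1 i0) //= ffunE eqxx (eq_bigr (fun i => #|B| - c.1 i)); last first.
    by move=> i /negbTE ne_i; rewrite ffunE ne_i.
  rewrite (eq_bigr (fun j => c.2 j + (j \in S))); last by move=> j _; rewrite ffunE.
  have le_i0 : #|B| - (c.1 i0 - #|S|) <= #|B :&: S|.
    have capBS : #|B| + #|S| <= n + #|B :&: S| by rewrite -cardsUI leq_add2r card_set_ord_le.
    by have := card_set_ord_le S; lia.
  by rewrite big_split sum_mem_cardI addnC leq_add.
- case: (boolP (j0 \in B)) => [Bj0 | nBj0].
  + rewrite (big_setD1 _ Bj0) ffunE eqxx (eq_bigr c.2); last first.
      by move=> j; rewrite in_setD1 => /andP[/negbTE ne_j _]; rewrite ffunE ne_j.
    have le_top : top_deficit [ffun i => c.1 i + (i \in S)] #|B|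
                  <= top_deficit c.1 #|B :\ j0| + #|~: S|.
      rewrite /top_deficit -[#|~: S|]sum_mem_card -big_split; apply: leq_sum => i _.
      (* generalizing merges the convertible copies of the cardinal into one [lia] atom *)
      rewrite ffunE (cardsD1 j0 B) Bj0 inE; move: #|B :\ j0| => b.
      by case: (i \in S) => /=; lia.
    have le_j0 : #|~: S| <= c.2 j0 - (s + #|S|).
      by have := cardsC S; rewrite card_ord; have := leq_b1 s; lia.
    by apply: leq_trans le_top _; rewrite addnC leq_add ?cond.
  + apply: leq_trans (top_deficit_homo _ _) (leq_trans (cond B) (eq_leq _)).
      by move=> i; rewrite /= ffunE leq_addr.
    apply: eq_bigr => j Bj; rewrite ffunE ifN //.
    by apply: contraNneq nBj0 => <-.
Qed.

Lemma recurrence_cond_chain_reach c d :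
  chain_reach c d -> recurrence_cond c -> recurrence_cond d.
Proof.
apply: clos_rt_invariant => {}c {}d [_ [v [topples _]]] cond.
exact: clos_rt_invariant recurrence_cond_topple _ _ topples (recurrence_cond_add_grain v cond).
Qed.

Lemma stable_chain_reach c d : chain_reach c d -> stable c -> stable d.
Proof. by apply: clos_rt_invariant => {}c {}d [_ [v [_ ?]]]. Qed.

End RecurrenceCondition.

Section Reachability.

Variables m n : nat.
Implicit Types c d : config m n.

Definition max_config : config m n := ([ffun=> n.-1], [ffun=> m]).

Lemma recurrence_cond_max_config : recurrence_cond max_config.
Proof.
move=> B; apply: (@leq_trans (\sum_(i < m) #|B|)).
  by apply: leq_sum => i _; apply: leq_subr.
rewrite sum_nat_const card_ord (eq_bigr (fun=> m)); last by move=> j _; rewrite ffunE.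
by rewrite sum_nat_const mulnC.
Qed.

Lemma max_configE c : stable c ->
  (forall i, n.-1 <= c.1 i) -> (forall j, m <= c.2 j) -> c = max_config.
Proof.
move=> [top_lt bot_lt] top_ge bot_ge.
rewrite [c]surjective_pairing; congr pair; apply/ffunP => x; rewrite ffunE.
  by apply/eqP; rewrite eqn_leq top_ge andbT -ltnS (ltn_predK (top_lt x)).
by apply/eqP; rewrite eqn_leq bot_ge andbT -ltnS.
Qed.

Lemma chain_step_add_grain c v :
  stable c -> stable (add_grain c v) -> chain_step c (add_grain c v).
Proof. by move=> sc sa; split=> //; exists v; split=> //; apply: rt_refl. Qed.

Definition gap c : nat := \sum_(i < m) (n.-1 - c.1 i) + \sum_(j < n) (m - c.2 j).

Lemma chain_reach_max_config c : stable c -> chain_reach c max_config.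
Proof.
move: c; apply: (induction_ltof1 _ gap) => c IH sc; case: (sc) => top_lt bot_lt.
have step v : stable (add_grain c v) -> gap (add_grain c v) < gap c -> chain_reach c max_config.
  move=> sa lt_gap; apply: rt_trans (rt_step _ _ _ _ (chain_step_add_grain sc sa)) (IH _ _ sa).
  exact/ltP.
case: (pickP (fun i => c.1 i < n.-1)) => [i lt_i | top_max].
  apply: (step (inl i)).
    by split=> [i'|//]; rewrite ffunE; case: eqP => [->|_]; [lia | rewrite addn0].
  rewrite /gap ltn_add2r; apply: (ltn_sum i) => [i'|]; rewrite ffunE.
    by rewrite leq_sub2l ?leq_addr.
  by rewrite eqxx; lia.
case: (pickP (fun j => c.2 j < m)) => [j lt_j | bot_max].
  apply: (step (inr j)).
    by split=> [//|j']; rewrite ffunE; case: eqP => [->|_]; [lia | rewrite addn0].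
  rewrite /gap ltn_add2l; apply: (ltn_sum j) => [j'|]; rewrite ffunE.
    by rewrite leq_sub2l ?leq_addr.
  by rewrite eqxx; lia.
rewrite (max_configE sc) => [|i|j]; first exact: rt_refl.
  by rewrite leqNgt top_max.
by rewrite leqNgt bot_max.
Qed.

Lemma topple_to_sink d j : m < d.2 j -> topple_step d (d.1, [ffun j' => d.2 j' - (j' == j)]).
Proof.
move=> over; right; exists j; split=> //; exists true, set0.
congr pair; apply/ffunP => x; rewrite !ffunE; first by rewrite in_set0 addn0.
by case: eqP => [->|_]; rewrite ?cards0 ?subn0.
Qed.

Lemma topples_to_sink d (r : seq 'I_n) : uniq r -> (forall j, j \in r -> m < d.2 j) ->
  clos_refl_trans _ (@topple_step m n) d (d.1, [ffun j => d.2 j - count_mem j r]).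
Proof.
elim: r d => [|j r IH] d.
  move=> _ _; set d0 := (_, _); suff -> : d0 = d by apply: rt_refl.
  by rewrite [d]surjective_pairing /d0; congr pair; apply/ffunP => x; rewrite ffunE subn0.
move=> /andP[rj uniq_r] over.
apply: rt_trans (rt_step _ _ _ _ (topple_to_sink (over j (mem_head j r)))) _.
set d1 := (d.1, _); set d2 := (d.1, _).
suff -> : d2 = (d1.1, [ffun x => d1.2 x - count_mem x r]).
  apply: IH => // x rx; have /negbTE ne_xj : x != j by apply: contraNneq rj => <-.
  by rewrite ffunE ne_xj subn0; apply: over; rewrite inE rx orbT.
by congr pair; apply/ffunP => x; rewrite !ffunE /= subnDA eq_sym.
Qed.

Definition raise_top c (i : 'I_m) : config m n :=
  ([ffun i' => if i' == i then n.-1 else c.1 i'], c.2).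

Lemma stable_raise_top c i : stable c -> stable (raise_top c i).
Proof.
move=> [top_lt bot_lt]; split=> // i'; rewrite ffunE.
by case: eqP => _ //; have := top_lt i; lia.
Qed.

Lemma chain_step_raise_top c i :
  stable c -> (forall j, c.2 j = m) -> chain_step (raise_top c i) c.
Proof.
move=> sc bot_m; split; first exact: stable_raise_top.
exists (inl i); split=> //; case: sc => top_lt _.
set S := [set j : 'I_n | j < n - c.1 i].
have cardS : #|S| = n - c.1 i by rewrite card_ord_prefix ?leq_subr.
set a := add_grain _ _.
set t : config m n := ([ffun i' => if i' == i then a.1 i - #|S| else a.1 i'],
                       [ffun j => a.2 j + (j \in S)]).
apply: (@rt_trans _ _ _ t).
  apply: rt_step; left; exists i; split; last by exists S.
  by rewrite !ffunE eqxx; have := top_lt i; lia.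
suff -> : c = (t.1, [ffun j => t.2 j - count_mem j (enum S)]).
  apply: topples_to_sink (enum_uniq _) _ => j.
  by rewrite mem_enum ffunE /= bot_m => ->; rewrite addn1.
rewrite [c]surjective_pairing; congr pair; apply/ffunP => x; rewrite !ffunE.
  have n_gt0 : 0 < n := leq_ltn_trans (leq0n _) (top_lt i).
  by case: eqP => [->|_]; rewrite ?eqxx ?addn0 // addn1 prednK // cardS subKn // ltnW.
by rewrite /= count_uniq_mem ?enum_uniq // mem_enum addnK.
Qed.

Lemma chain_reach_of_full_bottom c :
  stable c -> (forall j, c.2 j = m) -> chain_reach max_config c.
Proof.
move: c; apply: (induction_ltof1 _ (fun c => \sum_(i < m) (n.-1 - c.1 i))) => c IH sc bot_m.
case: (pickP (fun i => c.1 i < n.-1)) => [i lt_i | top_max].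
  apply: rt_trans (IH _ _ (stable_raise_top i sc) bot_m) (rt_step _ _ _ _ _).
    apply/ltP; apply: (ltn_sum i) => [i'|]; rewrite ffunE; last by rewrite eqxx; lia.
    by case: eqP => [->|_]; rewrite ?subnn.
  exact: chain_step_raise_top.
rewrite -(max_configE sc) => [|i|j]; first exact: rt_refl.
  by rewrite leqNgt top_max.
by rewrite bot_m.
Qed.

Definition raise_bottom c (T : {set 'I_m}) (b : 'I_n) : config m n :=
  ([ffun i => c.1 i - (i \in T)], [ffun j => if j == b then m else c.2 j]).

Lemma stable_raise_bottom c (T : {set 'I_m}) b : stable c -> stable (raise_bottom c T b).
Proof.
move=> [top_lt bot_lt]; split=> [i|j]; rewrite ffunE.
  exact: leq_ltn_trans (leq_subr _ _) (top_lt i).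
by case: eqP.
Qed.

Lemma chain_step_raise_bottom c (T : {set 'I_m}) b : stable c -> #|T| = m - c.2 b ->
  (forall i, i \in T -> 0 < c.1 i) -> chain_step (raise_bottom c T b) c.
Proof.
move=> sc cardT pos; split; first exact: stable_raise_bottom.
exists (inr b); split=> //; apply: rt_step; right; exists b.
split; first by rewrite !ffunE !eqxx addn1.
exists true, T; rewrite [LHS]surjective_pairing; congr pair; apply/ffunP => x; rewrite !ffunE.
  by case: (boolP (x \in T)) => [/pos x_gt0 | _]; rewrite ?subn0 ?addn0 // subnK.
case: eqP => [->|_]; rewrite ?addn0 // eqxx cardT addn1 add1n subSS subKn //.
by case: sc => _ /(_ b).
Qed.

Lemma top_set_gt0 c (T : {set 'I_m}) b :
  recurrence_cond c -> #|T| = m - c.2 b ->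
  (forall i i', i \in T -> i' \notin T -> c.1 i' <= c.1 i) ->
  forall i, i \in T -> 0 < c.1 i.
Proof.
move=> cond cardT topT i0 Ti0; rewrite lt0n; apply/negP => /eqP c_i0.
have zeros : #|i0 |: ~: T| <= c.2 b.
  have := cond [set b]; rewrite cards1 big_set1; apply: leq_trans.
  rewrite /top_deficit -sum_mem_card.
  apply: leq_sum => i _; rewrite !inE; case: eqP => [->|_] /=; first by rewrite c_i0.
  by case: (boolP (i \in T)) => //= Ti; have := topT _ _ Ti0 Ti; rewrite c_i0; lia.
have T_gt0 : 0 < #|T| by apply/card_gt0P; exists i0.
move: zeros; rewrite cardsU1 inE Ti0 -(leq_add2l #|T|) addnCA cardsC card_ord.
by move: T_gt0; rewrite cardT; lia.
Qed.

Lemma recurrence_cond_raise_bottom c (T : {set 'I_m}) b :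
  recurrence_cond c -> c.2 b <= m -> #|T| = m - c.2 b ->
  (forall i i', i \in T -> i' \notin T -> c.1 i' <= c.1 i) ->
  recurrence_cond (raise_bottom c T b).
Proof.
move=> cond le_bm cardT topT B; have pos := top_set_gt0 cond cardT topT.
case: (boolP (b \in B)) => [Bb | nBb].
  rewrite (big_setD1 _ Bb) ffunE eqxx (eq_bigr c.2); last first.
    by move=> j; rewrite in_setD1 => /andP[/negbTE ne_j _]; rewrite ffunE ne_j.
  have le_top :
    top_deficit [ffun i => c.1 i - (i \in T)] #|B| <= top_deficit c.1 #|B| + #|T|.
    rewrite /top_deficit -[#|T|]sum_mem_card -big_split; apply: leq_sum => i _.
    by rewrite ffunE; case: (i \in T) => /=; lia.
  apply: leq_trans le_top _; rewrite -[X in _ <= X + _](subnKC le_bm) -cardT addnAC leq_add2r.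
  by rewrite -big_setD1 ?cond.
rewrite (eq_bigr c.2); last first.
  by move=> j Bj; rewrite ffunE ifN //; apply: contraNneq nBb => <-.
case: (boolP [exists i in T, c.1 i <= #|B|]) => [/existsP[i0 /andP[Ti0 le_i0]] | /existsP none].
  have cardC : #|~: T| = c.2 b.
    by apply/eqP; rewrite -(eqn_add2l #|T|) cardsC card_ord cardT subnK.
  rewrite -(leq_add2l (c.2 b)); have := cond (b |: B).
  rewrite big_setU1 //= cardsU1 nBb add1n; apply: leq_trans; rewrite addnC -cardC.
  rewrite /top_deficit -[#|~: T|]sum_mem_card -big_split; apply: leq_sum => i _.
  rewrite ffunE inE; case: (boolP (i \in T)) => Ti /=.
    by have := pos i Ti; lia.
  by rewrite subn0 addn1 subSn // (leq_trans (topT _ _ Ti0 Ti) le_i0).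
apply: leq_trans (cond B); apply: leq_sum => i _; rewrite ffunE.
case: (boolP (i \in T)) => Ti /=; last by rewrite subn0.
have : #|B| < c.1 i by rewrite ltnNge; apply/negP => le_iB; apply: none; exists i; rewrite Ti.
by move: #|B| (c.1 i) => k x; lia.
Qed.

Lemma chain_reach_of_recurrence_cond c :
  stable c -> recurrence_cond c -> chain_reach max_config c.
Proof.
move: c; apply: (induction_ltof1 _ (fun c => \sum_(j < n) (m - c.2 j))) => c IH sc cond.
case: (pickP (fun j => c.2 j < m)) => [b lt_bm | bot_max]; last first.
  apply: chain_reach_of_full_bottom => // j; apply/eqP.
  by rewrite eqn_leq [m <= _]leqNgt bot_max andbT -ltnS; case: sc => _ /(_ j).
have le_tm : m - c.2 b <= #|'I_m| by rewrite card_ord leq_subr.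
have [T cardT topT] := exists_top_set c.1 le_tm.
have pos := top_set_gt0 cond cardT topT.
have cond' := recurrence_cond_raise_bottom cond (ltnW lt_bm) cardT topT.
apply: rt_trans (IH _ _ (stable_raise_bottom T b sc) cond') (rt_step _ _ _ _ _).
  apply/ltP; apply: (ltn_sum b) => [j|]; rewrite ffunE; last by rewrite eqxx subnn subn_gt0.
  by case: eqP => [->|_]; rewrite ?subnn.
exact: chain_step_raise_bottom sc cardT pos.
Qed.

End Reachability.

Theorem theorem2p2 (m n : nat) (c : config m n) :
  0 < n -> stable c ->
  (stoch_recurrent c <->
     (forall j : nat, 1 <= j <= n ->
        \sum_(l < j) nth 0 (sorted_bottom c) l >= \sum_(1 <= l < j.+1) kk c l))
  /\
  (stoch_recurrent c ->
     level c = ((\sum_(j < n) c.2 j)%N%:Z - (\sum_(1 <= l < n.+1) kk c l)%N%:Z)%R).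
Proof.
move=> _ sc; split; last by move=> _; exact: level_stable.
rewrite -recurrence_condE; split=> [[_ back] | cond].
  apply: recurrence_cond_chain_reach (back _ (chain_reach_max_config sc)) _.
  exact: recurrence_cond_max_config.
split=> // d cd; apply: rt_trans (chain_reach_of_recurrence_cond sc cond).
exact: chain_reach_max_config (stable_chain_reach cd sc).
Qed.
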